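(* Let $\mathcal{T}$ be a separable multi-transducer with a single initial state. Then $[\![\mathcal{T}]\!]$ is multi-sequential.
   Context: A multi-transducer is a tuple $\mathcal{T}=(Q,E,I,F,f)$ with finite state set $Q$, initial states $I$, final states $F$, transitions $E\subseteq Q\times\Sigma\times\Gamma^*\times Q$, and a final output function $f$ mapping each final state to a finite set of words of $\Gamma^*$; it realises $[\![\mathcal{T}]\!]=\{(u,wx) : i\xrightarrow{u\mid w}t,\ i\in I,\ t\in F,\ x\in f(t)\}$, where $i\xrightarrow{u\mid w}t$ means a run from $i$ to $t$ reading $u$ and outputting $w$. A transition is transient if its source and target lie in distinct strongly connected components (equivalently there is no run from its target to its source). $\mathcal{T}$ is separable if it has a single initial state and any two distinct transitions with the same source and the same input letter are transient. A transducer (final output function into $\Gamma^*$) is sequential if it has a single initial state and at most one transition per (state, input letter); a sequential function is one realised by a sequential transducer; a relation is multi-sequential if it is a finite union of sequential functions. *)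

From mathcomp Require Import all_boot.
Set Implicit Arguments. Unset Strict Implicit. Unset Printing Implicit Defensive.

(* T = (Q, E, I, F, f) over input alphabet Sigma and output alphabet Gamma.
   E is a finite set of transitions (p, a, w, q), represented by a seq;
   f t is the finite set of final output words of a final state t. *)
Record mtrans (Sigma Gamma : finType) := MTrans {
  mt_state : finType;
  mt_trans : seq (mt_state * Sigma * seq Gamma * mt_state);
  mt_init  : {set mt_state};
  mt_final : {set mt_state};
  mt_out   : mt_state -> seq (seq Gamma)
}.
Arguments mt_state {Sigma Gamma}.
Arguments mt_trans {Sigma Gamma}.
Arguments mt_init {Sigma Gamma}.
Arguments mt_final {Sigma Gamma}.
Arguments mt_out {Sigma Gamma}.

Section MT.
Variables (Sigma Gamma : finType) (T : mtrans Sigma Gamma).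

Inductive mrun : mt_state T -> seq Sigma -> seq Gamma -> mt_state T -> Prop :=
| mrun_nil q : mrun q [::] [::] q
| mrun_cons p a w q u w' r :
    (p, a, w, q) \in mt_trans T -> mrun q u w' r -> mrun p (a :: u) (w ++ w') r.

Definition mrel (u : seq Sigma) (v : seq Gamma) : Prop :=
  exists i t w x, [/\ i \in mt_init T, mrun i u w t, t \in mt_final T,
                      x \in mt_out T t & v = w ++ x].

Definition transient (e : mt_state T * Sigma * seq Gamma * mt_state T) : Prop :=
  let: (p, _, _, q) := e in ~ (exists u w, mrun q u w p).

Definition separable : Prop :=
  (exists i, mt_init T = [set i]) /\
  forall e1 e2, e1 \in mt_trans T -> e2 \in mt_trans T -> e1 <> e2 ->
    e1.1.1.1 = e2.1.1.1 -> e1.1.1.2 = e2.1.1.2 ->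
    transient e1 /\ transient e2.
End MT.

(* single initial state, at most one transition per (state, letter) given by a
   partial function, partial final output function into Gamma^* (its domain is
   the set of final states). *)
Record strans (Sigma Gamma : finType) := STrans {
  st_state : finType;
  st_init  : st_state;
  st_delta : st_state -> Sigma -> option (seq Gamma * st_state);
  st_out   : st_state -> option (seq Gamma)
}.
Arguments st_state {Sigma Gamma}.
Arguments st_init {Sigma Gamma}.
Arguments st_delta {Sigma Gamma}.
Arguments st_out {Sigma Gamma}.

Section ST.
Variables (Sigma Gamma : finType) (T : strans Sigma Gamma).

Fixpoint srun (q : st_state T) (u : seq Sigma) : option (seq Gamma * st_state T) :=
  match u with
  | [::] => Some ([::], q)
  | a :: u' =>
      match st_delta T q a with
      | None => None
      | Some (w, q') =>
          match srun q' u' with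
          | None => None
          | Some (w', r) => Some (w ++ w', r)
          end
      end
  end.

Definition srel (u : seq Sigma) (v : seq Gamma) : Prop :=
  exists w t x, [/\ srun (st_init T) u = Some (w, t), st_out T t = Some x & v = w ++ x].
End ST.

Definition sequential_function (Sigma Gamma : finType)
  (R : seq Sigma -> seq Gamma -> Prop) : Prop :=
  exists T : strans Sigma Gamma, forall u v, R u v <-> srel T u v.

Definition multi_sequential (Sigma Gamma : finType)
  (R : seq Sigma -> seq Gamma -> Prop) : Prop :=
  exists (k : nat) (Rs : 'I_k -> seq Sigma -> seq Gamma -> Prop),
    (forall i, sequential_function (Rs i)) /\
    forall u v, R u v <-> exists i, Rs i u v.

From mathcomp Require Import all_boot.
Set Implicit Arguments. Unset Strict Implicit. Unset Printing Implicit Defensive.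

(* In a separable transducer an accepting run never uses two distinct
   transitions with the same source and letter: if e1 came before e2 in the
   run, the part of the run between them would lead from the target of e1 back
   to its source, contradicting transience.  So every accepting run follows
   some partial choice function Q * Sigma -> E, and ends with some final pair
   (t, x).  There are finitely many such choices, and fixing one yields a
   sequential transducer; [[T]] is the union of the functions they realise. *)

Lemma multi_sequential_finUnion (Sigma Gamma : finType) (I : finType)
    (R : seq Sigma -> seq Gamma -> Prop) (Rs : I -> seq Sigma -> seq Gamma -> Prop) :
  (forall i, sequential_function (Rs i)) ->
  (forall u v, R u v <-> exists i, Rs i u v) ->
  multi_sequential R.
Proof.
move=> seqRs RE; exists #|I|, (fun j => Rs (enum_val j)); split=> [j|u v].
  exact: seqRs.
split=> [/RE [i Ri]|[j Rj]]; last by apply/RE; exists (enum_val j).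
by exists (enum_rank i); rewrite enum_rankK.
Qed.

Section SeparableTransducer.
Variables (Sigma Gamma : finType) (T : mtrans Sigma Gamma).
Local Notation Q := (mt_state T).
Local Notation E := (Q * Sigma * seq Gamma * Q)%type.
Local Notation mrun := (@mrun _ _ T).

Definition src (e : E) : Q := e.1.1.1.
Definition lbl (e : E) : Sigma := e.1.1.2.
Definition out (e : E) : seq Gamma := e.1.2.
Definition tgt (e : E) : Q := e.2.

Fixpoint trans_path (p : Q) (es : seq E) (r : Q) : bool :=
  if es is e :: es' then (src e == p) && trans_path (tgt e) es' r else p == r.

Lemma trans_path_mrun p es r :
  trans_path p es r -> {subset es <= mt_trans T} ->
  mrun p (map lbl es) (flatten (map out es)) r.
Proof.
elim: es p => [|[[[p' a] w] q] es IH] p /=; first by move/eqP->; constructor.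
case/andP=> /eqP <- path_es sub_es.
apply: mrun_cons; first exact/sub_es/mem_head.
by apply: IH => // e e_es; apply: sub_es; rewrite inE e_es orbT.
Qed.

Lemma mrun_trans_path p u w r :
  mrun p u w r ->
  exists es, [/\ trans_path p es r, {subset es <= mt_trans T},
                 u = map lbl es & w = flatten (map out es)].
Proof.
elim=> [q|p' a w' q u' w'' r' e_tr _ [es [path_es sub_es -> ->]]].
  by exists [::]; split=> //= e.
exists ((p', a, w', q) :: es); split=> //=; first by rewrite /src eqxx.
by move=> e; rewrite inE => /predU1P [->|/sub_es].
Qed.

Lemma trans_path_prefix q es r e :
  trans_path q es r -> e \in es ->
  exists s, {subset s <= es} /\ trans_path q s (src e).
Proof.
elim: es q => [|e' es IH] q //= /andP [/eqP src_e' path_es].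
rewrite inE => /predU1P [->|e_es]; first by exists [::]; split=> //=; rewrite src_e'.
have [s [sub_s path_s]] := IH _ path_es e_es.
exists (e' :: s); split; last by rewrite /= src_e' eqxx.
by move=> x; rewrite !inE => /predU1P [->|/sub_s ->]; rewrite ?eqxx ?orbT.
Qed.

Lemma trans_path_between p es r e1 e2 :
  trans_path p es r -> e2 \in es -> index e1 es < index e2 es ->
  exists s, {subset s <= es} /\ trans_path (tgt e1) s (src e2).
Proof.
elim: es p => [|e es IH] p //= /andP [_ path_es].
have [-> | e2_e] := eqVneq e2 e; first by rewrite ltn0.
rewrite inE (negPf e2_e) /= => e2_es; have [<- _ | _] := eqVneq e e1.
  have [s [sub_s path_s]] := trans_path_prefix path_es e2_es.
  by exists s; split=> // x /sub_s x_es; rewrite inE x_es orbT.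
rewrite ltnS => lt_index.
have [s [sub_s path_s]] := IH _ path_es e2_es lt_index.
by exists s; split=> // x /sub_s x_es; rewrite inE x_es orbT.
Qed.

Definition deterministic (es : seq E) : Prop :=
  {in es &, forall e1 e2, src e1 = src e2 -> lbl e1 = lbl e2 -> e1 = e2}.

Lemma transient_no_return (e : E) :
  transient e -> ~ exists u w, mrun (tgt e) u w (src e).
Proof. by case: e => [[[p a] w] q]. Qed.

Lemma separable_path_index_leq p es r e1 e2 :
  separable T -> trans_path p es r -> {subset es <= mt_trans T} ->
  e1 \in es -> e2 \in es -> src e1 = src e2 -> lbl e1 = lbl e2 ->
  index e2 es <= index e1 es.
Proof.
move=> [_ sepT] path_es sub_es e1_es e2_es src12 lbl12.
rewrite leqNgt; apply/negP => lt_index.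
have ne12 : e1 <> e2 by move=> eq12; rewrite eq12 ltnn in lt_index.
have [trans_e1 _] := sepT _ _ (sub_es _ e1_es) (sub_es _ e2_es) ne12 src12 lbl12.
apply: (transient_no_return trans_e1).
have [s [sub_s path_s]] := trans_path_between path_es e2_es lt_index.
exists (map lbl s), (flatten (map out s)); rewrite src12.
by apply: trans_path_mrun => // x /sub_s /sub_es.
Qed.

Lemma separable_path_deterministic p es r :
  separable T -> trans_path p es r -> {subset es <= mt_trans T} ->
  deterministic es.
Proof.
move=> sepT path_es sub_es e1 e2 e1_es e2_es src12 lbl12.
apply: (index_inj e1 e1_es e2_es); apply/eqP; rewrite eqn_leq.
by rewrite !(separable_path_index_leq sepT path_es sub_es).
Qed.

Definition final_outputs : seq (Q * seq Gamma) :=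
  [seq (t, x) | t <- enum (mt_final T), x <- mt_out T t].

Lemma mem_final_outputs tx :
  tx \in final_outputs -> tx.1 \in mt_final T /\ tx.2 \in mt_out T tx.1.
Proof. by case/allpairsPdep=> t [x] [t_final x_out ->]; rewrite -mem_enum. Qed.

Definition choice_fun : finType := {ffun Q * Sigma -> option (seq_sub (mt_trans T))}.

Definition branch : finType := (choice_fun * seq_sub final_outputs)%type.

Definition branch_delta (d : choice_fun) (p : Q) (a : Sigma) :
    option (seq Gamma * Q) :=
  if d (p, a) is Some e then
    if (src (val e) == p) && (lbl (val e) == a) then Some (out (val e), tgt (val e))
    else None
  else None.

Definition branch_out (tx : seq_sub final_outputs) (q : Q) : option (seq Gamma) :=
  if q == (val tx).1 then Some (val tx).2 else None.

Definition branch_trans (i : Q) (b : branch) : strans Sigma Gamma :=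
  STrans i (branch_delta b.1) (branch_out b.2).

Lemma branch_srun_mrun i b p u w r :
  @srun _ _ (branch_trans i b) p u = Some (w, r) -> mrun p u w r.
Proof.
elim: u p w r => [|a u IH] p w r /=; first by case=> <- <-; constructor.
rewrite /branch_delta; case: (b.1 (p, a)) => [[[[[p' a'] w'] q] e_tr]|] //=.
rewrite /src /lbl /=; case: ifP => // /andP [/eqP <- /eqP <-].
case run_u: srun => [[w'' r']|] // [<- <-].
exact: mrun_cons e_tr (IH _ _ _ run_u).
Qed.

Lemma trans_path_branch_srun i (d : choice_fun) tx p es r :
  {in es, forall e, omap val (d (src e, lbl e)) = Some e} ->
  trans_path p es r ->
  @srun _ _ (branch_trans i (d, tx)) p (map lbl es) = Some (flatten (map out es), r).
Proof.
elim: es p => [|e es IH] p d_es /=; first by move/eqP->.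
case/andP=> /eqP src_e path_es; rewrite /branch_delta -src_e.
have := d_es e (mem_head _ _); case: (d _) => [e'|] //= [->].
rewrite !eqxx /= (IH (tgt e)) // => x x_es.
by apply: d_es; rewrite inE x_es orbT.
Qed.

Definition choice_of (es : seq E) : choice_fun :=
  [ffun qa => [pick e : seq_sub (mt_trans T) |
                 [&& val e \in es, src (val e) == qa.1 & lbl (val e) == qa.2]]].

Lemma choice_ofE es :
  deterministic es -> {subset es <= mt_trans T} ->
  {in es, forall e, omap val (choice_of es (src e, lbl e)) = Some e}.
Proof.
move=> det_es sub_es e e_es; rewrite ffunE.
case: pickP => [e' /and3P [e'_es /eqP src_e' /eqP lbl_e'] | none] /=.
  by rewrite (det_es _ _ e'_es e_es).
by have := none (SeqSub (sub_es e e_es)); rewrite /= e_es !eqxx.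
Qed.

Lemma mrel_branchesE i :
  separable T -> mt_init T = [set i] ->
  forall u v, mrel T u v <-> exists b, srel (branch_trans i b) u v.
Proof.
move=> sepT init_i u v; split.
- case=> i' [t [w [x [+ run_u t_final x_out ->]]]].
  rewrite init_i in_set1 => /eqP i'_i; subst i'.
  have [es [path_es sub_es -> ->]] := mrun_trans_path run_u.
  have det_es := separable_path_deterministic sepT path_es sub_es.
  have tx_final : (t, x) \in final_outputs.
    by apply/allpairsPdep; exists t, x; rewrite mem_enum.
  exists (choice_of es, SeqSub tx_final), (flatten (map out es)), t, x; split=> //.
    exact: trans_path_branch_srun (choice_ofE det_es sub_es) path_es.
  by rewrite /= /branch_out eqxx.
- case=> [[d tx]] [w [t [x [run_u]]]]; rewrite /= /branch_out.
  case: eqP run_u => // -> run_u [<-] ->.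
  have [t_final x_out] := mem_final_outputs (valP tx).
  exists i, (val tx).1, w, (val tx).2; split=> //; first by rewrite init_i set11.
  exact: branch_srun_mrun run_u.
Qed.

End SeparableTransducer.

Theorem lemma5 (Sigma Gamma : finType) (T : mtrans Sigma Gamma) :
  separable T -> multi_sequential (mrel T).
Proof.
move=> sepT; have [[i init_i] _] := sepT.
apply: (multi_sequential_finUnion (Rs := fun b => srel (branch_trans i b))).
  by move=> b; exists (branch_trans i b).
exact: mrel_branchesE.
Qed.
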